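(* Let $L\ge 2$, $M=L^2$, and consider square $M$-QAM whose constellation points form an $L\times L$ equally spaced grid, indexed by $(k,k')\in\{0,\dots,L-1\}^2$ (in-phase index $k$, quadrature index $k'$), carrying distinct original symbols $s_{o,k,k'}$. For $s_1=s_{o,k_1,k_1'}$ and $s_2=s_{o,k_2,k_2'}$, the superposed signal (synchronous phase, equal power, no noise) is the point of the superposed constellation with index $(l,l')=(k_1+k_2,\,k_1'+k_2')\in\{0,\dots,2L-2\}^2$. Let $c:\{0,\dots,2L-2\}^2\to\mathcal{S}$ be any map and define $C(s_{o,k_1,k_1'},s_{o,k_2,k_2'})=c(k_1+k_2,k_1'+k_2')$. Then $C$ satisfies the Exclusive Law (for all $s_1'\ne s_1$ and all $s_2$, $C(s_1',s_2)\ne C(s_1,s_2)$; and for all $s_2'\ne s_2$ and all $s_1$, $C(s_1,s_2')\ne C(s_1,s_2)$) if and only if the superposed constellation points in any $L$ by $L$ square are mapped to distinct symbols, i.e. for every $(a,b)\in\{0,\dots,L-1\}^2$ the restriction of $c$ to $\{a,\dots,a+L-1\}\times\{b,\dots,b+L-1\}$ is injective.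
   Context: The Exclusive Law is taken as the necessary and sufficient condition for unique decodability at destinations that know one of the two source symbols and receive the coded symbol $C(s_1,s_2)$ from the relay. *)

From mathcomp Require Import all_boot.
Set Implicit Arguments. Unset Strict Implicit. Unset Printing Implicit Defensive.

Lemma sup_idx_lt (L : nat) (k1 k2 : 'I_L) : k1 + k2 < (2 * L).-1.
Proof.
case: L k1 k2 => [[]//|L] k1 k2.
have h1 := ltn_ord k1; have h2 := ltn_ord k2.
rewrite mul2n -addnn addSn /=.
by rewrite -addnS leq_add // -ltnS.
Qed.

Definition sup_idx (L : nat) (k1 k2 : 'I_L) : 'I_(2 * L).-1 :=
  Ordinal (sup_idx_lt k1 k2).

(* Original symbols s_{o,k,k'} are identified with their (distinct) indices (k,k'). *)
Definition qam_sym (L : nat) := ('I_L * 'I_L)%type.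

Definition netcode (L : nat) (S : Type) (c : 'I_(2 * L).-1 -> 'I_(2 * L).-1 -> S)
  (s1 s2 : qam_sym L) : S :=
  c (sup_idx s1.1 s2.1) (sup_idx s1.2 s2.2).

Definition exclusive_law (T S : Type) (C : T -> T -> S) : Prop :=
  (forall s1 s1' s2, s1' <> s1 -> C s1' s2 <> C s1 s2) /\
  (forall s1 s2 s2', s2' <> s2 -> C s1 s2' <> C s1 s2).

Definition squares_distinct (L : nat) (S : Type)
  (c : 'I_(2 * L).-1 -> 'I_(2 * L).-1 -> S) : Prop :=
  forall (a b : 'I_L) (l1 l1' l2 l2' : 'I_(2 * L).-1),
    a <= l1 < a + L -> b <= l1' < b + L ->
    a <= l2 < a + L -> b <= l2' < b + L ->
    c l1 l1' = c l2 l2' -> l1 = l2 /\ l1' = l2'.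

From mathcomp Require Import all_boot.
From mathcomp Require Import zify.

Set Implicit Arguments.
Unset Strict Implicit.
Unset Printing Implicit Defensive.

(* The superposition index l = k1 + k2 is symmetric in
   the two sources, so the network code C(s1,s2) = c(k1+k2, k1'+k2') is a
   symmetric map and the two halves of the Exclusive Law coincide: the law
   says exactly that, for each fixed s2 = (a,b), the map s1 |-> C(s1,s2) is
   injective.  For fixed (a,b), the map (k1,k1') |-> (k1+a, k1'+b) is a
   bijection from the L x L grid of original symbols onto the square
   {a..a+L-1} x {b..b+L-1} of the superposed constellation.  Hence
   injectivity of s1 |-> C(s1,(a,b)) is injectivity of c on that square,
   which is the square condition. *)

Lemma exclusive_law_sym (T : eqType) (S : Type) (C : T -> T -> S) :
  (forall s1 s2, C s1 s2 = C s2 s1) ->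
  exclusive_law C <-> forall s2, injective (C ^~ s2).
Proof.
move=> symC; split=> [[excl _] s2 s1 s1' E | inj].
  by case: (s1' =P s1) => // /(excl _ _ s2); rewrite E.
by split=> [s1 s1' s2 ne /inj // | s1 s2 s2' ne]; rewrite !(symC s1) => /inj.
Qed.

Section SuperposedGrid.

Variable L : nat.

Lemma sup_idxC (k1 k2 : 'I_L) : sup_idx k1 k2 = sup_idx k2 k1.
Proof. by apply: val_inj; rewrite /= addnC. Qed.

Lemma sup_idx_inj (a : 'I_L) : injective (fun k : 'I_L => sup_idx k a).
Proof. by move=> k1 k2 /(congr1 val) /= /addIn /val_inj. Qed.

Definition in_window (a : 'I_L) (l : 'I_(2 * L).-1) : bool := a <= l < a + L.

Lemma in_windowP (a : 'I_L) (l : 'I_(2 * L).-1) :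
  reflect (exists k : 'I_L, l = sup_idx k a) (in_window a l).
Proof.
apply: (iffP andP) => [[la lt_l] | [k ->]]; last by rewrite /= leq_addl addnC ltn_add2l.
have lt_k : l - a < L by lia.
by exists (Ordinal lt_k); apply: val_inj => /=; lia.
Qed.

Variable S : Type.
Variable c : 'I_(2 * L).-1 -> 'I_(2 * L).-1 -> S.

Lemma netcodeC (s1 s2 : qam_sym L) : netcode c s1 s2 = netcode c s2 s1.
Proof. by rewrite /netcode !(sup_idxC s1.1) !(sup_idxC s1.2). Qed.

Definition square_injective (a b : 'I_L) : Prop :=
  forall l1 l1' l2 l2' : 'I_(2 * L).-1,
    in_window a l1 -> in_window b l1' -> in_window a l2 -> in_window b l2' ->
    c l1 l1' = c l2 l2' -> l1 = l2 /\ l1' = l2'.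

Lemma section_injectiveE (a b : 'I_L) :
  injective (netcode c ^~ (a, b)) <-> square_injective a b.
Proof.
split=> [inj l1 l1' l2 l2' | sq [k1 k1'] [j1 j1'] E].
  move=> /in_windowP[k1 ->] /in_windowP[k1' ->] /in_windowP[j1 ->] /in_windowP[j1' ->] E.
  by have [-> ->] : (k1, k1') = (j1, j1') by exact: (inj (k1, k1') (j1, j1')).
have win (k : 'I_L) (x : 'I_L) : in_window x (sup_idx k x) by apply/in_windowP; exists k.
by have [/sup_idx_inj -> /sup_idx_inj ->] :=
  sq _ _ _ _ (win k1 a) (win k1' b) (win j1 a) (win j1' b) E.
Qed.

End SuperposedGrid.

Theorem corollary1 (L : nat) (hL : 2 <= L) (S : Type)
  (c : 'I_(2 * L).-1 -> 'I_(2 * L).-1 -> S) :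
  exclusive_law (netcode c) <-> squares_distinct c.
Proof.
rewrite (exclusive_law_sym (netcodeC c)).
split=> [inj a b | sq [a b]]; first exact/section_injectiveE.
exact/section_injectiveE/sq.
Qed.
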